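(* Let $k\ge 3$, $n_1,\dots,n_k\ge 2$ and $r\in[k]$. The LC orbit of the clique-star $CS^r_{n_1,\dots,n_k}$ has size $$|\mathcal{O}(CS^r_{n_1,\dots,n_k})|=\sum_{\substack{I\subseteq[k]\\ |I|\text{ odd}}}\prod_{i\in I}n_i+\sum_{j=1}^k\prod_{i\in[k]\setminus\{j\}}(n_i+1).$$
   Context: $[k]=\{1,\dots,k\}$. The clique-star $CS^r_{n_1,\dots,n_k}$ has vertex set $U_1\sqcup\cdots\sqcup U_k$ with $|U_i|=n_i$; each $U_i$ is a clique, every vertex of $U_r$ is adjacent to every vertex of $U_i$ for all $i\ne r$, and there are no edges between $U_i$ and $U_l$ for distinct $i,l\ne r$. The local complement $c_v(G)$ complements the edges among the neighbours of $v$. $\mathcal{O}(G)$ is the set of all graphs on the labelled vertex set $V(G)$ obtainable from $G$ by finite sequences of local complements (labelled graphs are counted). *)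

From mathcomp Require Import all_boot.
Set Implicit Arguments. Unset Strict Implicit. Unset Printing Implicit Defensive.

(* A simple graph on a finite labelled vertex set V is represented by its set
   of ordered adjacent pairs (symmetric, irreflexive). *)
Definition graph (V : finType) := {set V * V}.

Definition nbhd (V : finType) (G : graph V) (v : V) : {set V} :=
  [set u | (v, u) \in G].

Definition local_compl (V : finType) (v : V) (G : graph V) : graph V :=
  [set e | (e \in G) (+) [&& e.1 \in nbhd G v, e.2 \in nbhd G v & e.1 != e.2]].

Definition lc_step (V : finType) : rel (graph V) :=
  fun G H => [exists v, H == local_compl v G].

Definition lc_orbit (V : finType) (G : graph V) : {set graph V} :=
  [set H | connect (@lc_step V) G H].

(* Vertex set U_1 ⊔ ... ⊔ U_k with |U_i| = n i (indices 0..k-1). *)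
Definition cs_vertex (k : nat) (n : 'I_k -> nat) := {i : 'I_k & 'I_(n i)}.

Definition clique_star (k : nat) (n : 'I_k -> nat) (r : 'I_k)
  : graph (cs_vertex n) :=
  [set e | (e.1 != e.2) &&
     [|| tag e.1 == tag e.2, tag e.1 == r | tag e.2 == r]].

From mathcomp Require Import all_boot.
Set Implicit Arguments. Unset Strict Implicit. Unset Printing Implicit Defensive.

(* Every graph in the orbit is described by a configuration: each class U_i is
   a clique, an independent set, or a star centred at some c_i in U_i, and the
   exposed vertices (the centres and all vertices of centreless classes) are
   joined across classes according to a quotient graph on [k] that is either
   complete or a star centred at some class q.  Local complementation at an
   exposed vertex maps such a graph to the graph of another configuration, at
   a leaf it does nothing, and it is an involution; so the orbit of the
   clique-star is the set of graphs of the configurations reachable from it.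
   These are exactly the configurations in which the class q carries no centre
   (star quotient) or the number of centres is odd (complete quotient), the
   type of every centreless class being then forced.  For k >= 3 and all
   n_i >= 2 the graph determines the centres and the quotient, so the orbit is
   counted by these pairs (quotient, centres), which gives the two sums. *)

Lemma big_option (R : Type) (idx : R) (op : Monoid.com_law idx) (T : finType)
    (F : option T -> R) :
  \big[op/idx]_(o : option T) F o = op (F None) (\big[op/idx]_(t : T) F (Some t)).
Proof.
rewrite (bigD1 None) //=; congr (op _ _).
by rewrite (reindex_omap Some id) //=; [apply: eq_bigl => t; rewrite eqxx | case].
Qed.

Section LocalComplement.
Variable V : finType.
Implicit Types (G : graph V) (v : V).

Lemma nbhd_local_compl G v : (v, v) \notin G -> nbhd (local_compl v G) v = nbhd G v.
Proof. by move=> vv; apply/setP => u; rewrite /nbhd !inE /= (negbTE vv) addbF. Qed.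

Lemma local_complK G v : (v, v) \notin G -> local_compl v (local_compl v G) = G.
Proof.
move=> vv; apply/setP => e.
by rewrite [in LHS]inE nbhd_local_compl // inE -addbA addbb addbF.
Qed.

Lemma local_compl_nbhd_le1 G v : #|nbhd G v| <= 1 -> local_compl v G = G.
Proof.
move=> /card_le1_eqP N1; apply/setP => -[x y]; rewrite inE /=.
case: (boolP (x \in nbhd G v)) => Nx; last by rewrite addbF.
case: (boolP (y \in nbhd G v)) => Ny; last by rewrite andbF addbF.
by rewrite (N1 _ _ Nx Ny) eqxx andbF addbF.
Qed.

End LocalComplement.

Lemma exists_notin (T : finType) (A : {set T}) : #|A| < #|T| -> exists x, x \notin A.
Proof.
move=> ltA; have : 0 < #|~: A| by rewrite -(ltn_add2l #|A|) addn0 cardsC.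
by case/card_gt0P => x; rewrite inE; exists x.
Qed.

(** * Configurations and their graphs *)

Section Model.
Variables (k : nat) (n : 'I_k -> nat).
Local Notation V := (cs_vertex n).

Definition centres := {ffun 'I_k -> option V}.
Definition flags := {ffun 'I_k -> bool}.

(* [quot = None]: all pairs of classes are joined; [quot = Some q]: only the
   pairs involving class q.  [centre i = Some c]: U_i is a star centred at c
   whose leaves have no other neighbours.  [indep i] only matters when U_i has
   no centre, and then says that U_i is independent rather than a clique. *)
Record config := Config { quot : option 'I_k; centre : centres; indep : flags }.

Definition well_centred (f : centres) :=
  [forall i, if f i is Some u then tag u == i else true].
Definition has_centre (f : centres) i := f i != None.
Definition is_centre (f : centres) (u : V) := f (tag u) == Some u.
Definition exposed (f : centres) (u : V) := ~~ has_centre f (tag u) || is_centre f u.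

Definition quot_adj (Q : option 'I_k) (a c : 'I_k) :=
  if Q is Some q then (a == q) || (c == q) else true.

Definition class_adj (f : centres) (b : flags) (x y : V) :=
  if has_centre f (tag x) then is_centre f x || is_centre f y else ~~ b (tag x).

Definition adj (s : config) (x y : V) :=
  (x != y) && (if tag x == tag y then class_adj (centre s) (indep s) x y
               else [&& exposed (centre s) x, exposed (centre s) y
                      & quot_adj (quot s) (tag x) (tag y)]).

Definition model (s : config) : graph V := [set e | adj s e.1 e.2].

Definition quot_lc (Q : option 'I_k) j :=
  if Q is Some q then (if q == j then None else Some q) else Some j.

Definition centre_lc (f : centres) (b : flags) (v : V) : centres :=
  [ffun i => if i == tag v then (if has_centre f i || b i then None else Some v)
             else f i].

Definition indep_lc (Q : option 'I_k) (f : centres) (b : flags) (v : V) : flags :=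
  [ffun i => if i == tag v then b i && ~~ has_centre f i
             else b i (+) quot_adj Q i (tag v)].

Definition lc_config (s : config) (v : V) : config :=
  if exposed (centre s) v then
    Config (quot_lc (quot s) (tag v)) (centre_lc (centre s) (indep s) v)
           (indep_lc (quot s) (centre s) (indep s) v)
  else s.

Definition n_centres (f : centres) := #|[set i | has_centre f i]|.

(* On the orbit of the clique-star the type of a centreless class is forced
   by the quotient and the parity of the number of centres. *)
Definition canonical_indep (Q : option 'I_k) (f : centres) i :=
  if Q is Some q then (i == q) && odd (n_centres f) else true.

Definition admissible (Q : option 'I_k) (f : centres) :=
  well_centred f && (if Q is Some q then ~~ has_centre f q else odd (n_centres f)).

Definition normal (s : config) :=
  admissible (quot s) (centre s) &&
  [forall i, ~~ has_centre (centre s) i ==>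
             (indep s i == canonical_indep (quot s) (centre s) i)].

Lemma quot_adjC Q a c : quot_adj Q a c = quot_adj Q c a.
Proof. by case: Q => //= q; rewrite orbC. Qed.

Lemma quot_adj_lc Q j a c : a != j -> c != j -> a != c ->
  quot_adj (quot_lc Q j) a c = quot_adj Q a c (+) (quot_adj Q j a && quot_adj Q j c).
Proof.
case: Q => [q|] /= aj cj ac; last by rewrite (negbTE aj) (negbTE cj).
case: (eqVneq q j) => [->|qj] /=; first by rewrite (negbTE aj) (negbTE cj).
case: (eqVneq a q) => [aq|_]; case: (eqVneq c q) => //= cq.
by move: ac; rewrite aq cq eqxx.
Qed.

Lemma quot_adj_lc_centre Q j a : a != j -> quot_adj (quot_lc Q j) j a = quot_adj Q j a.
Proof.
case: Q => [q|] aj /=; last by rewrite eqxx.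
by case: (eqVneq q j) => [->|qj] //=; rewrite eq_sym (negbTE qj).
Qed.

Lemma adjC s x y : adj s x y = adj s y x.
Proof.
rewrite /adj /class_adj [y == x]eq_sym; case: (eqVneq (tag x) (tag y)) => [E|ne].
  by rewrite E orbC.
by rewrite quot_adjC; case: (exposed _ x); case: (exposed _ y).
Qed.

Lemma adj_exposed s v u : exposed (centre s) v -> adj s v u =
  (v != u) && (if tag v == tag u then has_centre (centre s) (tag v) || ~~ indep s (tag v)
               else exposed (centre s) u && quot_adj (quot s) (tag v) (tag u)).
Proof.
rewrite /adj /class_adj /exposed => exv; case: eqP => // _.
by case: (has_centre _ (tag v)) exv => //= ->.
Qed.

Lemma is_centre_eq (f : centres) (x y : V) :
  tag x = tag y -> is_centre f x -> is_centre f y -> x = y.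
Proof. by rewrite /is_centre => -> /eqP -> /eqP []. Qed.

Lemma n_centres_update j (f f' : centres) : (forall i, i != j -> f' i = f i) ->
  has_centre f j + n_centres f' = has_centre f' j + n_centres f.
Proof.
move=> off; rewrite /n_centres (cardsD1 j [set i | has_centre f i]).
rewrite (cardsD1 j [set i | has_centre f' i]) !inE addnCA.
suff -> : [set i | has_centre f' i] :\ j = [set i | has_centre f i] :\ j by [].
by apply/setP => i; rewrite !inE /has_centre; case: eqVneq => // /off ->.
Qed.

Section Step.
Variables (s : config) (v : V).
Hypothesis exv : exposed (centre s) v.
Local Notation Q := (quot s).
Local Notation f := (centre s).
Local Notation b := (indep s).
Local Notation j := (tag v).
Local Notation s' := (lc_config s v).

Lemma quot_lc_config : quot s' = quot_lc Q j.
Proof. by rewrite /lc_config exv. Qed.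

Lemma centre_lc_config i : centre s' i = if i == j then
  (if has_centre f i || b i then None else Some v) else f i.
Proof. by rewrite /lc_config exv ffunE. Qed.

Lemma indep_lc_config i : indep s' i =
  if i == j then b i && ~~ has_centre f i else b i (+) quot_adj Q j i.
Proof. by rewrite /lc_config exv ffunE quot_adjC. Qed.

Lemma is_centre_class (u : V) : tag u = j -> is_centre f u = has_centre f j && (u == v).
Proof.
move: exv; rewrite /exposed /is_centre /has_centre => + ->.
by case: (f j) => [w|] //= /eqP [->]; exact: (eq_sym (Some v) (Some u)).
Qed.

Lemma exposed_class (u : V) : tag u = j -> exposed f u = ~~ has_centre f j || (u == v).
Proof. by move=> uj; rewrite /exposed is_centre_class // uj; case: (has_centre f j). Qed.

Lemma has_centre_lc_class : has_centre (centre s') j = ~~ has_centre f j && ~~ b j.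
Proof.
by rewrite /has_centre centre_lc_config eqxx -/(has_centre f j) -negb_or; case: ifP.
Qed.

Lemma is_centre_lc_class (u : V) : tag u = j ->
  is_centre (centre s') u = ~~ has_centre f j && ~~ b j && (u == v).
Proof.
rewrite /is_centre => ->; rewrite centre_lc_config eqxx -negb_or.
by case: ifP => //= _; exact: (eq_sym (Some v) (Some u)).
Qed.

Lemma exposed_lc_class (u : V) : tag u = j ->
  exposed (centre s') u = [|| has_centre f j, b j | u == v].
Proof.
move=> uj; rewrite /exposed uj has_centre_lc_class is_centre_lc_class //.
by case: (has_centre f j); case: (b j).
Qed.

Lemma centre_lc_off i : i != j -> centre s' i = f i.
Proof. by move=> ij; rewrite centre_lc_config (negbTE ij). Qed.

Lemma is_centre_lc_off (u : V) : tag u != j -> is_centre (centre s') u = is_centre f u.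
Proof. by move=> uj; rewrite /is_centre centre_lc_off. Qed.

Lemma has_centre_lc_off i : i != j -> has_centre (centre s') i = has_centre f i.
Proof. by move=> ij; rewrite /has_centre centre_lc_off. Qed.

Lemma exposed_lc_off (u : V) : tag u != j -> exposed (centre s') u = exposed f u.
Proof. by move=> uj; rewrite /exposed has_centre_lc_off // is_centre_lc_off. Qed.

Lemma adj_lc_class (x y : V) : tag x = j -> tag y = j -> x != y ->
  adj s' x y = adj s x y (+) (adj s v x && adj s v y).
Proof.
move=> xj yj xy; rewrite [adj s v x]adj_exposed // [adj s v y]adj_exposed //.
rewrite /adj /class_adj xy xj yj eqxx has_centre_lc_class indep_lc_config eqxx.
rewrite (is_centre_lc_class xj) (is_centre_lc_class yj).
rewrite (is_centre_class xj) (is_centre_class yj).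
rewrite ![v == _]eq_sym /=.
case: (eqVneq x v) => [xv|_]; case: (eqVneq y v) => [yv|_] /=.
- by move: xy; rewrite xv yv eqxx.
all: by case: (has_centre f j); case: (b j).
Qed.

Lemma adj_lc_class_off (x y : V) : tag x = j -> tag y != j ->
  adj s' x y = adj s x y (+) (adj s v x && adj s v y).
Proof.
move=> xj yj; have xy : x != y by apply: contraNneq yj => <-; apply/eqP.
have vy : v != y by apply: contraNneq yj => <-.
rewrite [adj s v x]adj_exposed // [adj s v y]adj_exposed //.
rewrite /adj xy vy xj [j == _]eq_sym (negbTE yj) eqxx.
rewrite (exposed_lc_class xj) (exposed_lc_off yj) (exposed_class xj) quot_lc_config.
rewrite (quot_adj_lc_centre _ yj) [v == _]eq_sym /=.
case: (exposed f y); case: (quot_adj Q j (tag y)); rewrite /= ?andbF //.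
by case: (x == v); case: (has_centre f j); case: (b j).
Qed.

Lemma adj_lc_off_class (x y : V) : tag x != j -> tag y != j -> tag x = tag y -> x != y ->
  adj s' x y = adj s x y (+) (adj s v x && adj s v y).
Proof.
move=> xj yj Exy xy; have vx : v != x by apply: contraNneq xj => <-.
have vy : v != y by apply: contraNneq yj => <-.
rewrite [adj s v x]adj_exposed // [adj s v y]adj_exposed // /adj /class_adj.
rewrite xy vx vy Exy eqxx [j == _]eq_sym (negbTE yj) -Exy.
rewrite (has_centre_lc_off xj) (is_centre_lc_off xj) (is_centre_lc_off yj).
rewrite indep_lc_config (negbTE xj) /exposed -Exy /=.
case: (boolP (has_centre f (tag x))) => /= [_|_].
  case: (boolP (is_centre f x)) => cx; case: (boolP (is_centre f y)) => cy; rewrite ?andbF //.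
  by move: xy; rewrite (is_centre_eq Exy cx cy) eqxx.
by case: (b (tag x)); case: (quot_adj Q j (tag x)).
Qed.

Lemma adj_lc_off (x y : V) : tag x != j -> tag y != j -> tag x != tag y ->
  adj s' x y = adj s x y (+) (adj s v x && adj s v y).
Proof.
move=> xj yj Exy; have vx : v != x by apply: contraNneq xj => <-.
have vy : v != y by apply: contraNneq yj => <-.
have xy : x != y by apply: contraNneq Exy => ->.
rewrite [adj s v x]adj_exposed // [adj s v y]adj_exposed // /adj.
rewrite xy vx vy (negbTE Exy) [j == _]eq_sym (negbTE xj) [j == _]eq_sym (negbTE yj).
rewrite (exposed_lc_off xj) (exposed_lc_off yj) quot_lc_config (quot_adj_lc _ xj yj Exy) /=.
by case: (exposed f x); case: (exposed f y); case: (quot_adj Q (tag x) (tag y));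
  case: (quot_adj Q j (tag x)); case: (quot_adj Q j (tag y)).
Qed.

Lemma adj_lc (x y : V) : x != y ->
  adj s' x y = adj s x y (+) (adj s v x && adj s v y).
Proof.
move=> xy; case: (eqVneq (tag x) j) => xj; case: (eqVneq (tag y) j) => yj.
- exact: adj_lc_class.
- exact: adj_lc_class_off.
- by rewrite adjC adj_lc_class_off // andbC ![adj _ y x]adjC.
- case: (eqVneq (tag x) (tag y)) => Exy; first exact: adj_lc_off_class.
  exact: adj_lc_off.
Qed.

Lemma local_compl_exposed : local_compl v (model s) = model s'.
Proof.
apply/setP => -[x y]; rewrite /nbhd !inE /=.
case: (eqVneq x y) => [<-|xy]; first by rewrite /adj eqxx /= !andbF.
by rewrite adj_lc // andbT.
Qed.

Lemma well_centred_lc : well_centred f -> well_centred (centre s').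
Proof.
move=> /forallP wf; apply/forallP => i; rewrite centre_lc_config.
by case: eqVneq => [->|_]; [case: ifP | exact: wf].
Qed.

Lemma odd_n_centres_lc :
  odd (n_centres (centre s')) = odd (n_centres f) (+) (has_centre f j || ~~ b j).
Proof.
have /(congr1 odd) := n_centres_update centre_lc_off; rewrite !oddD has_centre_lc_class.
by case: (has_centre f j); case: (b j); case: (odd (n_centres f)); case: (odd (n_centres _)).
Qed.

Lemma n_centres_lc_centre : has_centre f j -> (n_centres (centre s')).+1 = n_centres f.
Proof.
by move=> hj; have := n_centres_update centre_lc_off; rewrite has_centre_lc_class hj add1n.
Qed.

Lemma normal_lc_exposed : normal s -> normal s'.
Proof.
case/andP => /andP [wf adm] /forallP canon.
have bj : ~~ has_centre f j -> b j = canonical_indep Q f j.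
  by move/(implyP (canon j))/eqP.
have bi i : i != j -> ~~ has_centre (centre s') i ->
    indep s' i = canonical_indep Q f i (+) quot_adj Q j i.
  move=> ij; rewrite has_centre_lc_off // indep_lc_config (negbTE ij).
  by move/(implyP (canon i))/eqP ->.
have bj' : indep s' j = b j && ~~ has_centre f j by rewrite indep_lc_config eqxx.
have := has_centre_lc_class; have := odd_n_centres_lc.
rewrite /normal /admissible well_centred_lc //= quot_lc_config.
move: adm bj bi; case: Q => [q|] /= adm bj bi par hj'; last first.
  rewrite hj' par adm; apply/andP; split; first by case: (boolP (has_centre f j)) => [|/bj ->].
  apply/forallP => i; apply/implyP; case: (eqVneq i j) => [->|ij]; last by move/(bi _ ij) ->.
  by rewrite bj'; case: (boolP (has_centre f j)) => [_|/bj ->]; rewrite /= ?andbF.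
case: (eqVneq q j) => [qj|qj] /=.
- rewrite qj in adm bj bi.
  rewrite (negbTE adm) (bj adm) eqxx /= addbN addbb in par hj'.
  rewrite par; apply/forallP => i; apply/implyP; case: (eqVneq i j) => [->|ij].
    by rewrite hj' bj' (bj adm) adm eqxx negbK andbT => ->.
  by move=> /(bi _ ij) ->; rewrite eqxx (negbTE ij).
- have flip : has_centre f j || ~~ b j.
    by case: (boolP (has_centre f j)) => //= /bj ->; rewrite eq_sym (negbTE qj).
  rewrite has_centre_lc_off // adm par flip addbT /=.
  apply/forallP => i; apply/implyP; case: (eqVneq i j) => [->|ij].
    rewrite bj' [j == q]eq_sym (negbTE qj).
    by case: (boolP (has_centre f j)) => [_|/bj ->]; rewrite ?andbF // [j == q]eq_sym (negbTE qj).
  move=> /(bi _ ij) ->; rewrite [j == q]eq_sym (negbTE qj) /=.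
  by case: (i == q); case: (odd (n_centres f)).
Qed.

End Step.

Lemma normal_lc s v : normal s -> normal (lc_config s v).
Proof.
have [exv|nexv] := boolP (exposed (centre s) v); first exact: normal_lc_exposed.
by rewrite /lc_config (negbTE nexv).
Qed.

Lemma nbhd_unexposed s v : ~~ exposed (centre s) v -> #|nbhd (model s) v| <= 1.
Proof.
rewrite /exposed negb_or negbK => /andP [hv cv].
have centre_nbhd u : u \in nbhd (model s) v -> tag v = tag u /\ is_centre (centre s) u.
  rewrite /nbhd !inE /adj /class_adj /exposed hv (negbTE cv) /= => /andP [_].
  by case: (eqVneq (tag v) (tag u)).
apply/card_le1_eqP => x y /centre_nbhd [vx cx] /centre_nbhd [vy cy].
exact: is_centre_eq (etrans (esym vy) vx) cy cx.
Qed.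

Lemma local_compl_model s v : local_compl v (model s) = model (lc_config s v).
Proof.
have [exv|nexv] := boolP (exposed (centre s) v); first exact: local_compl_exposed.
by rewrite local_compl_nbhd_le1 ?nbhd_unexposed // /lc_config (negbTE nexv).
Qed.

(** * The orbit of the clique-star *)

Definition start (r : 'I_k) : config := Config (Some r) [ffun => None] [ffun => false].

Lemma model_start r : model (start r) = clique_star n r.
Proof.
apply/setP => -[x y]; rewrite !inE /adj /class_adj /exposed /has_centre /= !ffunE /=.
by case: (tag x == tag y).
Qed.

Lemma n_centres_eq0 (f : centres) : (n_centres f == 0) = (f == [ffun => None]).
Proof.
rewrite cards_eq0; apply/eqP/eqP => [E|->].
  by apply/ffunP => i; apply/eqP; move/setP: E => /(_ i); rewrite !inE ffunE => /negbFE.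
by apply/setP => i; rewrite !inE /has_centre ffunE.
Qed.

Lemma n_centres0 : n_centres [ffun => None] = 0.
Proof. by apply/eqP; rewrite n_centres_eq0. Qed.

Lemma normal_start r : normal (start r).
Proof.
rewrite /normal /admissible /= /has_centre !ffunE eqxx /= n_centres0 andbT.
rewrite /well_centred; apply/andP; split; apply/forallP => i; by rewrite !ffunE ?andbF.
Qed.

Lemma exists_centre (f : centres) : well_centred f -> 0 < n_centres f ->
  exists c : V, is_centre f c.
Proof.
move=> /forallP wf; rewrite card_gt0 => /set0Pn [i]; rewrite inE /has_centre.
by have := wf i; case E: (f i) => [c|] // /eqP ci _; exists c; rewrite /is_centre ci E.
Qed.

Lemma is_centre_exposed (f : centres) (c : V) : is_centre f c -> exposed f c.
Proof. by rewrite /exposed => ->; rewrite orbT. Qed.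

Lemma is_centre_has_centre (f : centres) (c : V) : is_centre f c -> has_centre f (tag c).
Proof. by rewrite /is_centre /has_centre => /eqP ->. Qed.

Local Notation lc_connect := (connect (@lc_step V)).

Lemma lc_step_revert s v : lc_step (model (lc_config s v)) (model s).
Proof.
apply/existsP; exists v; rewrite -local_compl_model local_complK //.
by rewrite inE /adj eqxx.
Qed.

(* Complementing at a centre c deletes it and keeps a quotient centred at
   j <> tag c, so we can induct on the number of centres. *)
Lemma start_connect_star s j : normal s -> quot s = Some j ->
  lc_connect (model (start j)) (model s).
Proof.
move Em : (n_centres (centre s)) => m; elim: m s Em => [|m IH] s Em Ns Qs.
  move: Em => /eqP; rewrite n_centres_eq0 => /eqP f0.
  suff -> : s = start j by exact: connect0.
  case: s f0 Qs Ns => Q f b /= -> -> /andP [_ /forallP canon].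
  congr Config; apply/ffunP => i; have := canon i.
  by rewrite /= /has_centre !ffunE /= n_centres0 andbF => /eqP.
have [/andP [wf adm] _] := andP Ns; rewrite Qs /= in adm.
have [c cc] : exists c, is_centre (centre s) c by apply: exists_centre; rewrite ?Em.
have hc := is_centre_has_centre cc; have exc := is_centre_exposed cc.
have cj : tag c != j by apply: contraNneq adm => <-.
apply: connect_trans (connect1 (lc_step_revert s c)).
apply: IH; first by apply/eq_add_S; rewrite n_centres_lc_centre.
  exact: normal_lc.
by rewrite quot_lc_config // Qs /= eq_sym (negbTE cj).
Qed.

Lemma start_connect_start r j : (forall i, 0 < n i) ->
  lc_connect (model (start r)) (model (start j)).
Proof.
move=> n_gt0; case: (eqVneq j r) => [->|jr]; first exact: connect0.
pose u : V := Tagged _ (Ordinal (n_gt0 j)); pose w : V := Tagged _ (Ordinal (n_gt0 r)).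
pose s1 := lc_config (start j) u.
have exu : exposed (centre (start j)) u by rewrite /exposed /has_centre ffunE.
have Q1 : quot s1 = None by rewrite quot_lc_config //= eqxx.
have exw : exposed (centre s1) w.
  by rewrite /exposed /has_centre (centre_lc_off exu) ?ffunE // eq_sym.
have Q2 : quot (lc_config s1 w) = Some r by rewrite quot_lc_config // Q1.
have N2 := normal_lc w (normal_lc u (normal_start j)).
apply: connect_trans (start_connect_star N2 Q2) _.
by apply: connect_trans (connect1 (lc_step_revert s1 w)) _; exact/connect1/lc_step_revert.
Qed.

Lemma start_connect_normal r s : (forall i, 0 < n i) -> normal s ->
  lc_connect (model (start r)) (model s).
Proof.
move=> n_gt0 Ns; case Qs: (quot s) => [j|].
  exact: connect_trans (start_connect_start r j n_gt0) (start_connect_star Ns Qs).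
have [/andP [wf adm] _] := andP Ns; rewrite Qs /= in adm.
have [c cc] := exists_centre wf (odd_gt0 adm).
apply: connect_trans (connect1 (lc_step_revert s c)).
apply: connect_trans (start_connect_start r (tag c) n_gt0) _.
apply: start_connect_star; first exact: normal_lc.
by rewrite quot_lc_config ?Qs // is_centre_exposed.
Qed.

Lemma connect_model_normal s H : normal s -> lc_connect (model s) H ->
  exists2 t, normal t & H = model t.
Proof.
move=> + /connectP [p]; elim: p s => [|H' p IH] s Ns /=; first by move=> _ ->; exists s.
case/andP => /existsP [v /eqP ->] pth Hl.
by apply: (IH _ (normal_lc v Ns)); rewrite -local_compl_model.
Qed.

Lemma exists_exposed (f : centres) i : 0 < n i -> well_centred f ->
  exists2 w : V, tag w = i & exposed f w.
Proof.
move=> ni /forallP /(_ i); case E: (f i) => [c|] /= ci.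
  by exists c; [exact/eqP | rewrite is_centre_exposed // /is_centre (eqP ci) E].
by exists (Tagged (fun i => 'I_(n i)) (Ordinal ni)); rewrite // /exposed /has_centre /= E.
Qed.

Lemma exists_other_vertex (c : V) : 1 < n (tag c) -> exists2 u : V, tag u = tag c & u != c.
Proof.
case: c => i x /= ni; have [y] : exists y, y \notin [set x].
  by apply: exists_notin; rewrite cards1 card_ord.
by rewrite inE => yx; exists (Tagged (fun i => 'I_(n i)) y); rewrite // eq_Tagged.
Qed.

(** * Recovering a configuration from its graph *)

Section Injectivity.
Hypothesis k_gt2 : 2 < k.
Hypothesis n_gt1 : forall i, 1 < n i.

Let n_gt0 i : 0 < n i := ltnW (n_gt1 i).

Lemma exposedE s u : well_centred (centre s) ->
  exposed (centre s) u = [exists w, (tag w != tag u) && ((u, w) \in model s)].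
Proof.
move=> wf; apply/idP/existsP => [exu|[w /andP [wu]]]; last first.
  by rewrite inE /adj /= [tag u == _]eq_sym (negbTE wu) => /andP [_ /andP []].
have [l lu ql] : exists2 l, l != tag u & quot_adj (quot s) (tag u) l.
  have [l] : exists l, l \notin [set tag u].
    by apply: exists_notin; rewrite cards1 card_ord ltnW.
  rewrite inE => lu; case: (quot s) => [q|]; last by exists l.
  case: (eqVneq (tag u) q) => [uq|uq]; first by exists l; rewrite //= uq eqxx.
  by exists q; rewrite 1?eq_sym //= eqxx orbT.
have [w wl exw] := exists_exposed (n_gt0 l) wf.
have uw : u != w by apply: contraNneq lu => ->; rewrite wl.
by exists w; rewrite wl lu inE /adj /= uw wl eq_sym (negbTE lu) exu exw.
Qed.

Lemma is_centreE (f : centres) c :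
  is_centre f c = exposed f c && [exists u, (tag u == tag c) && ~~ exposed f u].
Proof.
apply/idP/andP => [cc|[exc /existsP [u /andP [/eqP uc nexu]]]].
  split; first exact: is_centre_exposed.
  have [u uc uneq] := exists_other_vertex (n_gt1 (tag c)).
  apply/existsP; exists u; rewrite uc eqxx /exposed uc (is_centre_has_centre cc) /=.
  by apply: contra uneq => cu; rewrite (is_centre_eq uc cu cc).
by move: exc nexu; rewrite /exposed uc; case: (has_centre f (tag c)).
Qed.

Lemma centre_pick (f : centres) i : well_centred f ->
  f i = [pick c | (tag c == i) && is_centre f c].
Proof.
move=> /forallP /(_ i); case: pickP => [c /andP [/eqP <- /eqP //]|none].
by case E: (f i) => [c|] // ci; move: (none c); rewrite ci /is_centre (eqP ci) E eqxx.
Qed.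

Lemma well_centred_inj (f1 f2 : centres) : well_centred f1 -> well_centred f2 ->
  exposed f1 =1 exposed f2 -> f1 = f2.
Proof.
move=> wf1 wf2 E; apply/ffunP => i; rewrite !centre_pick //; apply: eq_pick => c.
by rewrite !is_centreE E; congr (_ && (_ && _)); apply: eq_existsb => u; rewrite E.
Qed.

Lemma quot_adj_inj Q1 Q2 :
  (forall a c, a != c -> quot_adj Q1 a c = quot_adj Q2 a c) -> Q1 = Q2.
Proof.
have avoid x y : exists z : 'I_k, (z != x) && (z != y).
  have [z] : exists z, z \notin [set x; y].
    by apply: exists_notin; rewrite cards2 card_ord; case: (x != y); rewrite // ltnW.
  by rewrite !inE negb_or; exists z.
case: Q1 Q2 => [q1|] [q2|] //= E.
- case: (eqVneq q1 q2) => [->//|q12]; have [z /andP [z1 z2]] := avoid q1 q2.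
  by have := E q1 z; rewrite eqxx (negbTE z2) (negbTE q12) eq_sym => /(_ z1).
- have [a /andP [a1 _]] := avoid q1 q1; have [c /andP [c1 ca]] := avoid q1 a.
  by have := E a c; rewrite (negbTE a1) (negbTE c1) eq_sym => /(_ ca).
- have [a /andP [a2 _]] := avoid q2 q2; have [c /andP [c2 ca]] := avoid q2 a.
  by have := E a c; rewrite (negbTE a2) (negbTE c2) eq_sym => /(_ ca).
Qed.

Lemma model_inj s1 s2 : model s1 = model s2 ->
  well_centred (centre s1) -> well_centred (centre s2) ->
  centre s1 = centre s2 /\ quot s1 = quot s2.
Proof.
move=> E wf1 wf2.
have Ec : centre s1 = centre s2 by apply: well_centred_inj => // u; rewrite !exposedE ?E.
split => //; apply: quot_adj_inj => a c ac.
have [w1 w1a ex1] := exists_exposed (n_gt0 a) wf1.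
have [w2 w2c ex2] := exists_exposed (n_gt0 c) wf1.
have w12 : w1 != w2 by apply: contraNneq ac => w12; rewrite -w1a -w2c w12.
by move/setP: E => /(_ (w1, w2)); rewrite !inE /adj /= w12 w1a w2c (negbTE ac) -Ec ex1 ex2.
Qed.

End Injectivity.

Definition canonical_config Q (f : centres) :=
  Config Q f [ffun i => canonical_indep Q f i].

Lemma normal_canonical_config Q f : normal (canonical_config Q f) = admissible Q f.
Proof.
rewrite /normal /=; case: (admissible Q f) => //=.
by apply/forallP => i; rewrite ffunE eqxx implybT.
Qed.

Lemma model_normal_canonical s : normal s -> model s = model (canonical_config (quot s) (centre s)).
Proof.
case: s => Q f b /andP [_ /forallP /= canon]; apply/setP => -[x y].
rewrite !inE /adj /class_adj /= ffunE.
by case: (boolP (has_centre f (tag x))) => // /(implyP (canon _)) /eqP ->.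
Qed.

Lemma lc_orbit_clique_star r : (forall i, 0 < n i) ->
  lc_orbit (clique_star n r) =
  [set model (canonical_config p.1 p.2)
     | p in [set p : option 'I_k * centres | admissible p.1 p.2]].
Proof.
move=> n_gt0; apply/setP => H; rewrite inE -model_start; apply/idP/imsetP.
  case/(connect_model_normal (normal_start r)) => s Ns ->.
  exists (quot s, centre s); first by rewrite inE; case/andP: Ns.
  exact: model_normal_canonical.
case=> -[Q f]; rewrite inE => adm ->; apply: start_connect_normal => //.
by rewrite normal_canonical_config.
Qed.

(** * Counting configurations *)

Lemma card_class i : #|[pred u : V | tag u == i]| = n i.
Proof.
pose tg (x : 'I_(n i)) : V := Tagged (fun i => 'I_(n i)) x.
have tg_inj : injective tg by move=> x y /eqP; rewrite eq_Tagged => /eqP.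
rewrite -[n i]card_ord -(card_imset _ tg_inj); apply: eq_card => u; rewrite !inE.
apply/eqP/imsetP => [|[x _ ->] //]; case: u => j x /= ji; subst j; by exists x.
Qed.

Lemma card_option_pred (T : finType) (P : pred T) (c : bool) :
  #|[pred o : option T | if o is Some x then P x else c]| = c + #|P|.
Proof.
rewrite -!sum1_card [LHS]big_mkcond big_option [in RHS]big_mkcond !inE /=.
by case: c.
Qed.

Lemma card_centres_on (A B : 'I_k -> bool) :
  #|[set f : centres | well_centred f && [forall i, if f i is Some _ then B i else A i]]| =
  \prod_i (A i + B i * n i).
Proof.
pose F i := [pred o : option V | if o is Some u then B i && (tag u == i) else A i].
have -> : \prod_i (A i + B i * n i) = foldr muln 1 [seq #|F i| | i : 'I_k].
  rewrite foldrE big_map big_enum /=; apply: eq_bigr => i _.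
  rewrite (card_option_pred (fun u => B i && (tag u == i))).
  by case: (B i); rewrite ?mul1n ?card_class ?card0.
rewrite -card_family; apply: eq_card => f; rewrite inE.
apply/andP/familyP => [[/forallP wf /forallP fAB] i | fF].
  by have := wf i; have := fAB i; rewrite inE; case: (f i) => //= u -> ->.
by split; apply/forallP => i; have := fF i; rewrite inE; case: (f i) => //= u /andP [? ?].
Qed.

Lemma card_centres_avoiding j :
  #|[set f : centres | well_centred f && ~~ has_centre f j]| = \prod_(i | i != j) (n i).+1.
Proof.
have -> : \prod_(i | i != j) (n i).+1 = \prod_i (true + (i != j) * n i).
  by rewrite big_mkcond; apply: eq_bigr => i _; case: (i != j); rewrite ?mul1n.
rewrite -card_centres_on; apply: eq_card => f; rewrite !inE; congr (_ && _).
apply/idP/forallP => [nh i | H].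
  by case E: (f i) => //; apply: contraNneq nh => ij; rewrite /has_centre -ij E.
by have := H j; rewrite /has_centre; case: (f j); rewrite //= eqxx.
Qed.

Lemma card_centres_support (I : {set 'I_k}) :
  #|[set f : centres | well_centred f && ([set i | has_centre f i] == I)]| = \prod_(i in I) n i.
Proof.
have -> : \prod_(i in I) n i = \prod_i ((i \notin I) + (i \in I) * n i).
  by rewrite big_mkcond; apply: eq_bigr => i _; case: (i \in I); rewrite ?mul1n.
rewrite -card_centres_on; apply: eq_card => f; rewrite !inE; congr (_ && _).
apply/eqP/forallP => [<- i | H]; first by rewrite inE /has_centre; case: (f i).
by apply/setP => i; rewrite inE /has_centre; have := H i; case: (f i) => [u ->|/negbTE ->].
Qed.

Lemma card_centres_odd :
  #|[set f : centres | well_centred f && odd (n_centres f)]| =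
  \sum_(I : {set 'I_k} | odd #|I|) \prod_(i in I) n i.
Proof.
rewrite -sum1dep_card (partition_big (fun f => [set i | has_centre f i]) (fun I => odd #|I|)).
  apply: eq_bigr => I oI; rewrite -card_centres_support -sum1dep_card; apply: eq_bigl => f.
  by case: eqP => [E|_]; rewrite ?andbF // !andbT /n_centres E oI andbT.
by move=> f /andP [].
Qed.

Lemma card_admissible :
  #|[set p : option 'I_k * centres | admissible p.1 p.2]| =
  \sum_(I : {set 'I_k} | odd #|I|) \prod_(i in I) n i
  + \sum_(j < k) \prod_(i < k | i != j) (n i).+1.
Proof.
rewrite -sum1dep_card -(pair_big_dep xpredT admissible (fun _ _ => 1)) big_option /=.
rewrite sum1dep_card -card_centres_odd; congr (_ + _).
by apply: eq_bigr => j _; rewrite sum1dep_card -card_centres_avoiding.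
Qed.

End Model.

Theorem theorem8 (k : nat) (n : 'I_k -> nat) (r : 'I_k) :
  3 <= k -> (forall i, 2 <= n i) ->
  #|lc_orbit (clique_star n r)| =
    \sum_(I : {set 'I_k} | odd #|I|) \prod_(i in I) n i
    + \sum_(j < k) \prod_(i < k | i != j) (n i).+1.
Proof.
move=> k_gt2 n_gt1.
rewrite lc_orbit_clique_star => [|i]; last exact: ltnW.
rewrite card_in_imset ?card_admissible // => -[Q1 f1] [Q2 f2].
rewrite !inE => /andP [wf1 _] /andP [wf2 _] /(model_inj k_gt2 n_gt1).
by case=> // /= -> ->.
Qed.
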